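(* Let $(\mathfrak{g},[\cdot,\cdot]_{\mathfrak{g}})$ be a Leibniz algebra over a field $\mathbf{K}$, $(V;\rho^L,\rho^R)$ a representation, and $T:V\to\mathfrak{g}$ a relative Rota-Baxter operator. If $\mathcal{H}^2(V,\mathfrak{g})=0$, then every $\mathfrak{T}_1\in\mathcal{Z}^1(V,\mathfrak{g})$ is the infinitesimal of some formal deformation of $T$, i.e. there exist $\mathfrak{T}_i\in\mathrm{Hom}(V,\mathfrak{g})$, $i\ge2$, such that $T+\mathfrak{T}_1t+\sum_{i\ge2}\mathfrak{T}_it^i$ is a formal deformation of $T$.
   Context: A Leibniz algebra is a vector space $\mathfrak{g}$ with bilinear $[\cdot,\cdot]_{\mathfrak{g}}$ satisfying $[x,[y,z]_{\mathfrak{g}}]_{\mathfrak{g}}=[[x,y]_{\mathfrak{g}},z]_{\mathfrak{g}}+[y,[x,z]_{\mathfrak{g}}]_{\mathfrak{g}}$. A representation $(V;\rho^L,\rho^R)$: linear $\rho^L,\rho^R:\mathfrak{g}\to\mathfrak{gl}(V)$ with $\rho^L([x,y]_{\mathfrak{g}})=[\rho^L(x),\rho^L(y)]$, $\rho^R([x,y]_{\mathfrak{g}})=[\rho^L(x),\rho^R(y)]$, $\rho^R(y)\rho^L(x)=-\rho^R(y)\rho^R(x)$. A relative Rota-Baxter operator is a linear $T:V\to\mathfrak{g}$ with $[Tv_1,Tv_2]_{\mathfrak{g}}=T(\rho^L(Tv_1)v_2+\rho^R(Tv_2)v_1)$. Cohomology of $T$: $C^n(V,\mathfrak{g})=\mathrm{Hom}(\otimes^nV,\mathfrak{g})$,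 $C^0=\mathfrak{g}$, $\partial_T:C^n\to C^{n+1}$, $(\partial_Tf)(v_1,\dots,v_{n+1})=\sum_{i=1}^n(-1)^{i+1}[Tv_i,f(v_1,\dots,\hat v_i,\dots,v_{n+1})]_{\mathfrak{g}}-\sum_{i=1}^n(-1)^{i+1}T\rho^R(f(v_1,\dots,\hat v_i,\dots,v_{n+1}))v_i+(-1)^{n+1}[f(v_1,\dots,v_n),Tv_{n+1}]_{\mathfrak{g}}+(-1)^nT\rho^L(f(v_1,\dots,v_n))v_{n+1}+\sum_{1\le i<j\le n+1}(-1)^if(v_1,\dots,\hat v_i,\dots,v_{j-1},\rho^L(Tv_i)v_j+\rho^R(Tv_j)v_i,v_{j+1},\dots,v_{n+1})$; $\mathcal{Z}^k=\ker\partial_T\cap C^k$, $\mathcal{B}^k=\partial_T(C^{k-1})$, $\mathcal{H}^k=\mathcal{Z}^k/\mathcal{B}^k$. A formal deformation of $T$ is $T_t=\sum_{i\ge0}\mathfrak{T}_it^i$, $\mathfrak{T}_i\in\mathrm{Hom}(V,\mathfrak{g})$, $\mathfrak{T}_0=T$, extended $\mathbf{K}[[t]]$-linearly $V[[t]]\to\mathfrak{g}[[t]]$ (bracket and $\rho^L,\rho^R$ extended $\mathbf{K}[[t]]$-bilinearly), with $[T_t(u),T_t(v)]_{\mathfrak{g}}=T_t(\rho^L(T_t(u))v+\rho^R(T_t(v))u)$ for $u,v\in V$; its infinitesimal is $\mathfrak{T}_1$. *)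

From mathcomp Require Import all_boot all_order all_algebra.
Set Implicit Arguments. Unset Strict Implicit. Unset Printing Implicit Defensive.
Import GRing.Theory.
Local Open Scope ring_scope.

Section LeibnizDefs.
Variables (K : fieldType) (g V : lmodType K).

Definition leibniz_algebra (br : g -> g -> g) : Prop :=
  (forall x, linear (br x)) /\ (forall y, linear (fun x => br x y)) /\
  (forall x y z, br x (br y z) = br (br x y) z + br y (br x z)).

Definition leibniz_rep (br : g -> g -> g) (rhoL rhoR : g -> V -> V) : Prop :=
  (forall x, linear (rhoL x)) /\ (forall v, linear (fun x => rhoL x v)) /\
  (forall x, linear (rhoR x)) /\ (forall v, linear (fun x => rhoR x v)) /\
  (forall x y v, rhoL (br x y) v = rhoL x (rhoL y v) - rhoL y (rhoL x v)) /\
  (forall x y v, rhoR (br x y) v = rhoL x (rhoR y v) - rhoR y (rhoL x v)) /\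
  (forall x y v, rhoR y (rhoL x v) = - rhoR y (rhoR x v)).

Definition relative_RB (br : g -> g -> g) (rhoL rhoR : g -> V -> V)
  (T : V -> g) : Prop :=
  linear T /\
  forall v1 v2, br (T v1) (T v2) = T (rhoL (T v1) v2 + rhoR (T v2) v1).

(** n-cochains: C^n(V,g) = Hom(⊗^n V, g), represented as maps f : seq V -> g
    that are multilinear on lists of length n (values on lists of other
    lengths are irrelevant). *)
Definition multilinear (n : nat) (f : seq V -> g) : Prop :=
  forall (s : seq V) (i : nat), size s = n -> (i < n)%N ->
    linear (fun x => f (set_nth 0 s i x)).

Definition drop_at (i : nat) (s : seq V) : seq V := take i s ++ drop i.+1 s.

(** The coboundary ∂_T : C^n -> C^{n+1}, evaluated on a list s = [v_1;...;v_{n+1}]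
    (0-based indices i' = i - 1, j' = j - 1). *)
Definition dT (br : g -> g -> g) (rhoL rhoR : g -> V -> V) (T : V -> g)
  (n : nat) (f : seq V -> g) (s : seq V) : g :=
  \sum_(i < n) ((-1) ^+ i *: br (T (nth 0 s i)) (f (drop_at i s)))
  - \sum_(i < n) ((-1) ^+ i *: T (rhoR (f (drop_at i s)) (nth 0 s i)))
  + (-1) ^+ n.+1 *: br (f (take n s)) (T (nth 0 s n))
  + (-1) ^+ n *: T (rhoL (f (take n s)) (nth 0 s n))
  + \sum_(j < n.+1) \sum_(i < j)
      ((-1) ^+ i.+1 *:
        f (drop_at i (set_nth 0 s j
             (rhoL (T (nth 0 s i)) (nth 0 s j) + rhoR (T (nth 0 s j)) (nth 0 s i))))).

Definition cocycle br rhoL rhoR T (n : nat) (f : seq V -> g) : Prop :=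
  multilinear n f /\
  forall s : seq V, size s = n.+1 -> dT br rhoL rhoR T n f s = 0.

Definition coboundary br rhoL rhoR T (n : nat) (f : seq V -> g) : Prop :=
  exists h : seq V -> g, multilinear n.-1 h /\
    forall s : seq V, size s = n -> f s = dT br rhoL rhoR T n.-1 h s.

Definition H2_vanishes br rhoL rhoR T : Prop :=
  forall f : seq V -> g, cocycle br rhoL rhoR T 2 f -> coboundary br rhoL rhoR T 2 f.

Definition cochain1 (T1 : V -> g) : seq V -> g := fun s => T1 (nth 0 s 0).

(** T_t = sum_i Ts i t^i is a formal deformation of T: each Ts i linear,
    Ts 0 = T, and the RB identity holds in g[[t]], i.e. coefficientwise:
    coefficient of t^n of [T_t u, T_t v] equals that of
    T_t(rhoL(T_t u) v + rhoR(T_t v) u). *)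
Definition formal_deformation br rhoL rhoR (T : V -> g) (Ts : nat -> V -> g) : Prop :=
  (forall i, linear (Ts i)) /\ Ts 0%N = T /\
  forall (n : nat) (u v : V),
    \sum_(i < n.+1) br (Ts i u) (Ts (n - i)%N v) =
    \sum_(i < n.+1) Ts i (\sum_(j < n.+1 | (i + j == n)%N)
                            (rhoL (Ts j u) v + rhoR (Ts j v) u)).

End LeibnizDefs.

From mathcomp Require Import all_boot all_order all_algebra zify.
From Stdlib Require Import ClassicalEpsilon.
Import GRing.Theory.
Set Implicit Arguments. Unset Strict Implicit.
Local Open Scope ring_scope.

(* Write T_t = sum_i f_i t^i.  The coefficient of t^n in the defect
   [T_t u, T_t v] - T_t (rhoL (T_t u) v + rhoR (T_t v) u) is the obstruction
   Ob_n = sum_(i+j=n) D(f_i, f_j), where D(P, Q)(u, v) = [P u, Q v] - P (u o_Q v).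
   The part of Ob_n involving f_n is d_T f_n.  Expanding with the Leibniz and
   representation identities, sum_(a+b+c=n) d_(f_a) D(f_b, f_c) = 0 (the
   polarised graded Jacobi identity [θ, [θ, θ]] = 0), so once Ob_k = 0 for
   k < n the 2-cochain Ob_n is a cocycle.  Since H^2 = 0 it equals d_T h, and
   replacing f_n by f_n - h makes Ob_n vanish without touching Ob_k, k < n.
   Making these choices successively yields the deformation. *)

(* Reflexive decision procedure for identities in abelian groups: both sides
   are reified over a common list of atoms, and the identity holds as soon as
   every atom has the same integer coefficient on both sides. *)
Inductive zexpr := ZVar of nat | ZAdd of zexpr & zexpr | ZOpp of zexpr | ZZero.

Fixpoint zeval (M : zmodType) (env : seq M) (e : zexpr) : M :=
  match e with
  | ZVar i => env`_i
  | ZAdd e1 e2 => zeval env e1 + zeval env e2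
  | ZOpp e1 => - zeval env e1
  | ZZero => 0
  end.

Fixpoint zcoef (e : zexpr) (i : nat) : int :=
  match e with
  | ZVar j => (i == j)%:Z
  | ZAdd e1 e2 => zcoef e1 i + zcoef e2 i
  | ZOpp e1 => - zcoef e1 i
  | ZZero => 0
  end.

Fixpoint zsupp (e : zexpr) : nat :=
  match e with
  | ZVar j => j.+1
  | ZAdd e1 e2 => maxn (zsupp e1) (zsupp e2)
  | ZOpp e1 => zsupp e1
  | ZZero => 0
  end.

Lemma zevalE (M : zmodType) (env : seq M) e n : (zsupp e <= n)%N ->
  zeval env e = \sum_(i < n) env`_i *~ zcoef e i.
Proof.
elim: e => [j|e1 IH1 e2 IH2|e1 IH1|] /= le_en.
- rewrite (bigD1 (Ordinal le_en)) //= eqxx big1 ?addr0 // => i /negbTE.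
  by rewrite -val_eqE /= => ->.
- rewrite geq_max in le_en; case/andP: le_en => /IH1-> /IH2->.
  by rewrite -big_split; apply: eq_bigr => i _; rewrite mulrzDr.
- by rewrite IH1 // -sumrN; apply: eq_bigr => i _; rewrite mulrNz.
- by rewrite big1 // => i _; rewrite mulr0z.
Qed.

Definition zexpr_eqb (e1 e2 : zexpr) : bool :=
  all (fun i => zcoef e1 i == zcoef e2 i) (iota 0 (maxn (zsupp e1) (zsupp e2))).

Lemma zexpr_eqbP (M : zmodType) (env : seq M) e1 e2 :
  zexpr_eqb e1 e2 -> zeval env e1 = zeval env e2.
Proof.
move=> /allP eq_coef.
rewrite !(@zevalE _ _ _ (maxn (zsupp e1) (zsupp e2))) ?leq_maxl ?leq_maxr //.
apply: eq_bigr => i _; congr (_ *~ _); apply/eqP/eq_coef.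
by rewrite mem_iota add0n ltn_ord.
Qed.

(* The inner [match goal] runs [unify] for its effect only; its failure makes
   the outer [match] fall through to the next branch. *)
Ltac zindex x env :=
  lazymatch env with
  | ?y :: ?env' => match constr:(tt) with
                   | _ => let _ := match goal with _ => unify x y end in constr:(0%N)
                   | _ => let n := zindex x env' in constr:(n.+1)
                   end
  end.

Ltac zatoms t env :=
  lazymatch t with
  | ?a + ?b => let env := zatoms a env in zatoms b env
  | - ?a => zatoms a env
  | 0 => env
  | _ => match constr:(tt) with
         | _ => let _ := zindex t env in env
         | _ => constr:(t :: env)
         end
  end.

Ltac zreify t env :=
  lazymatch t with
  | ?a + ?b => let ea := zreify a env in let eb := zreify b env in constr:(ZAdd ea eb)
  | - ?a => let ea := zreify a env in constr:(ZOpp ea)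
  | 0 => constr:(ZZero)
  | _ => let n := zindex t env in constr:(ZVar n)
  end.

Ltac abel :=
  lazymatch goal with
  | |- @eq ?M ?l ?r =>
      let env := zatoms l (@nil M) in let env := zatoms r env in
      let el := zreify l env in let er := zreify r env in
      change (zeval env el = zeval env er);
      apply: zexpr_eqbP; vm_compute; reflexivity
  end.

Section TripleSums.
Variables (M : zmodType) (n : nat).

Definition sum3 (F : nat -> nat -> nat -> M) : M :=
  \sum_(a < n.+1) \sum_(b < n.+1) \sum_(c < n.+1)
     if (a + b + c == n)%N then F a b c else 0.

Lemma sum3_swap12 F : sum3 F = sum3 (fun a b c => F b a c).
Proof.
rewrite /sum3 exchange_big; apply: eq_bigr => a _; apply: eq_bigr => b _.
by apply: eq_bigr => c _; rewrite (addnC b a).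
Qed.

Lemma sum3_swap23 F : sum3 F = sum3 (fun a b c => F a c b).
Proof.
rewrite /sum3; apply: eq_bigr => a _; rewrite exchange_big.
apply: eq_bigr => b _; apply: eq_bigr => c _.
by rewrite -!addnA (addnC b c).
Qed.

Lemma eq_sum3 F G : (forall a b c, F a b c = G a b c) -> sum3 F = sum3 G.
Proof.
move=> eqFG; apply: eq_bigr => a _; apply: eq_bigr => b _; apply: eq_bigr => c _.
by rewrite eqFG.
Qed.

Lemma sum3D F G : sum3 (fun a b c => F a b c + G a b c) = sum3 F + sum3 G.
Proof.
rewrite /sum3 -big_split; apply: eq_bigr => a _; rewrite -big_split.
apply: eq_bigr => b _; rewrite -big_split; apply: eq_bigr => c _.
by case: ifP => _ //; rewrite /= addr0.
Qed.

Lemma sum3N F : sum3 (fun a b c => - F a b c) = - sum3 F.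
Proof.
rewrite /sum3 -sumrN; apply: eq_bigr => a _; rewrite -sumrN.
apply: eq_bigr => b _; rewrite -sumrN; apply: eq_bigr => c _.
by case: ifP => _; rewrite ?oppr0.
Qed.

Lemma sum3_perm12 F : sum3 (fun a b c => F b a c) = sum3 F.
Proof. by rewrite [LHS]sum3_swap12. Qed.

Lemma sum3_perm312 F : sum3 (fun a b c => F c a b) = sum3 F.
Proof. by rewrite [LHS]sum3_swap23 [LHS]sum3_swap12. Qed.

Lemma sum3_perm321 F : sum3 (fun a b c => F c b a) = sum3 F.
Proof. by rewrite [LHS]sum3_swap12 [LHS]sum3_swap23 [LHS]sum3_swap12. Qed.

Lemma sum3_perm_cancel F1 F2 F3 :
  sum3 (fun a b c => F1 a b c - F1 b a c + F2 a b c - F2 c a b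
                     + F3 a b c - F3 c b a) = 0.
Proof.
rewrite !sum3D !sum3N (sum3_perm12 F1) (sum3_perm312 F2) (sum3_perm321 F3).
abel.
Qed.

Lemma sum3E (F : nat -> nat -> nat -> M) :
  \sum_(a < n.+1) \sum_(b < (n - a).+1) F a b (n - a - b)%N = sum3 F.
Proof.
apply: eq_bigr => a _; have le_an : (a <= n)%N by rewrite -ltnS.
rewrite (big_ord_widen n.+1 (fun b => F a b (n - a - b)%N)); last by lia.
rewrite big_mkcond; apply: eq_bigr => b _.
case: ifP => le_b.
  rewrite -big_mkcond /= (eq_bigl (fun c : 'I_n.+1 => (c : nat) == n - a - b)%N).
    by rewrite big_ord1_eq ifT //; lia.
  by move=> c; apply/eqP/eqP; lia.
by rewrite big1 // => c _; case: eqP => // e; move/negbT: le_b; lia.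
Qed.

End TripleSums.

Lemma iterate_choice (A : Type) (P : nat -> A -> Prop) (R : nat -> A -> A -> Prop)
  (a0 : A) : P 0%N a0 -> (forall n a, P n a -> exists b, P n.+1 b /\ R n a b) ->
  exists s : nat -> A, forall n, P n (s n) /\ R n (s n) (s n.+1).
Proof.
move=> P0 extP.
pose next n a := epsilon (inhabits a) (fun b => P n.+1 b /\ R n a b).
have nextP n a : P n a -> P n.+1 (next n a) /\ R n a (next n a).
  move=> Pa; exact: epsilon_spec (extP n a Pa).
pose fix s n := if n is m.+1 then next m (s m) else a0.
have Ps n : P n (s n) by elim: n => [|n IH] //; exact: (nextP n _ IH).1.
by exists s => n; split; [exact: Ps | exact: (nextP n _ (Ps n)).2].
Qed.

Section LinearMaps.
Variables (K : fieldType) (U W : lmodType K).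

Lemma lin_add (h : U -> W) : linear h -> forall x y, h (x + y) = h x + h y.
Proof. by move=> hl x y; have := hl 1 x y; rewrite !scale1r. Qed.

Lemma lin_zero (h : U -> W) : linear h -> h 0 = 0.
Proof. by move=> hl; apply: (addrI (h 0)); rewrite -lin_add // !addr0. Qed.

Lemma lin_opp (h : U -> W) : linear h -> forall x, h (- x) = - h x.
Proof.
move=> hl x; apply: (addrI (h x)).
by rewrite -lin_add // !subrr lin_zero.
Qed.

Lemma scale_sign k (x : U) : (-1) ^+ k *: x = if odd k then - x else x.
Proof. by rewrite -signr_odd scaler_sign. Qed.

Lemma lin_comp (Z : lmodType K) (h : W -> Z) (k : U -> W) :
  linear h -> linear k -> linear (h \o k).
Proof. by move=> hh hk a x y; rewrite /= hk hh. Qed.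

Lemma lin_addf (h k : U -> W) : linear h -> linear k -> linear (fun x => h x + k x).
Proof. by move=> hh hk a x y; rewrite hh hk scalerDr addrACA. Qed.

Lemma lin_oppf (h : U -> W) : linear h -> linear (fun x => - h x).
Proof. by move=> hh a x y; rewrite hh scalerN opprD. Qed.

Lemma lin_sumf m (F : 'I_m -> U -> W) :
  (forall i, linear (F i)) -> linear (fun x => \sum_(i < m) F i x).
Proof.
move=> hF a x y; rewrite scaler_sumr -big_split; apply: eq_bigr => i _.
exact: hF.
Qed.

End LinearMaps.

Section BilinearMaps.
Variables (K : fieldType) (A B C : lmodType K) (f : A -> B -> C).
Hypotheses (f_linl : forall y, linear (f^~ y)) (f_linr : forall x, linear (f x)).

Lemma bilin_addl x x' y : f (x + x') y = f x y + f x' y.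
Proof. exact: (lin_add (f_linl y)). Qed.
Lemma bilin_addr x y y' : f x (y + y') = f x y + f x y'.
Proof. exact: lin_add. Qed.
Lemma bilin_oppl x y : f (- x) y = - f x y.
Proof. exact: (lin_opp (f_linl y)). Qed.
Lemma bilin_oppr x y : f x (- y) = - f x y.
Proof. exact: lin_opp. Qed.
Lemma bilin_zerol y : f 0 y = 0.
Proof. exact: (lin_zero (f_linl y)). Qed.
Lemma bilin_zeror x : f x 0 = 0.
Proof. exact: lin_zero. Qed.

End BilinearMaps.

Section LeibnizRepresentation.
Variables (K : fieldType) (g V : lmodType K).
Variables (br : g -> g -> g) (rhoL rhoR : g -> V -> V).
Hypotheses (Hla : leibniz_algebra br) (Hrep : leibniz_rep br rhoL rhoR).

Lemma br_linl y : linear (br^~ y). Proof. by case: Hla => _ []. Qed.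
Lemma br_linr x : linear (br x). Proof. by case: Hla. Qed.
Lemma rhoL_linl v : linear (rhoL^~ v). Proof. by case: Hrep => _ []. Qed.
Lemma rhoL_linr x : linear (rhoL x). Proof. by case: Hrep. Qed.
Lemma rhoR_linl v : linear (rhoR^~ v). Proof. by case: Hrep => _ [_ [_ []]]. Qed.
Lemma rhoR_linr x : linear (rhoR x). Proof. by case: Hrep => _ [_ []]. Qed.

Lemma leibniz x y z : br x (br y z) = br (br x y) z + br y (br x z).
Proof. by case: Hla => _ []. Qed.
Lemma rhoL_br x y v : rhoL (br x y) v = rhoL x (rhoL y v) - rhoL y (rhoL x v).
Proof. by case: Hrep => _ [_ [_ [_ []]]]. Qed.
Lemma rhoR_br x y v : rhoR (br x y) v = rhoL x (rhoR y v) - rhoR y (rhoL x v).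
Proof. by case: Hrep => _ [_ [_ [_ [_ []]]]]. Qed.
Lemma rhoR_rhoL x y v : rhoR y (rhoL x v) = - rhoR y (rhoR x v).
Proof. by case: Hrep => _ [_ [_ [_ [_ []]]]]. Qed.

Let addE := (bilin_addl br_linl, bilin_addr br_linr, bilin_addl rhoL_linl,
  bilin_addr rhoL_linr, bilin_addl rhoR_linl, bilin_addr rhoR_linr).
Let oppE := (bilin_oppl br_linl, bilin_oppr br_linr, bilin_oppl rhoL_linl,
  bilin_oppr rhoL_linr, bilin_oppl rhoR_linl, bilin_oppr rhoR_linr).
Let zeroE := (bilin_zerol br_linl, bilin_zeror br_linr, bilin_zerol rhoL_linl,
  bilin_zeror rhoL_linr, bilin_zerol rhoR_linl, bilin_zeror rhoR_linr).

Definition tprod (P : V -> g) (u v : V) : V := rhoL (P u) v + rhoR (P v) u.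

Definition rb_defect (P Q : V -> g) (u v : V) : g := br (P u) (Q v) - P (tprod Q u v).

(* (d_P om)(v1, v2, v3) for a 2-cochain om, i.e. the coboundary dT with P in
   place of T (see dT2E). *)
Definition d2 (P : V -> g) (om : V -> V -> g) (v1 v2 v3 : V) : g :=
  br (P v1) (om v2 v3) - br (P v2) (om v1 v3)
  - P (rhoR (om v2 v3) v1) + P (rhoR (om v1 v3) v2)
  - br (om v1 v2) (P v3) + P (rhoL (om v1 v2) v3)
  - om (tprod P v1 v2) v3 - om v2 (tprod P v1 v3) + om v1 (tprod P v2 v3).

(* [d2 X (rb_defect Y Z)] is a sum of differences between a piece and a
   permuted copy of it (d2_rb_defect), so all pieces cancel in the sum over
   a + b + c = n. *)
Section Pieces.
Variables (X Y Z : V -> g) (v1 v2 v3 : V).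

Definition d2_piece1 : g :=
  Y (rhoR (Z v3) (tprod X v1 v2)) + Y (rhoL (Z v2) (rhoL (X v1) v3))
  - br (X v2) (br (Y v1) (Z v3)).

Definition d2_piece2 : g :=
  rb_defect Y Z v1 (tprod X v2 v3) - br (Y v2) (Z (tprod X v1 v3))
  + Y (rhoR (Z (tprod X v1 v3)) v2) + Y (rhoL (Z v2) (rhoR (X v3) v1))
  + Y (rhoL (Z (tprod X v1 v2)) v3) - br (br (Y v1) (Z v2)) (X v3).

Definition d2_piece3 : g := - br (Y (tprod X v1 v2)) (Z v3).

End Pieces.

Lemma d2_rb_defect X Y Z : linear X -> linear Y -> linear Z -> forall v1 v2 v3,
  d2 X (rb_defect Y Z) v1 v2 v3 =
    d2_piece1 X Y Z v1 v2 v3 - d2_piece1 Y X Z v1 v2 v3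
  + d2_piece2 X Y Z v1 v2 v3 - d2_piece2 Z X Y v1 v2 v3
  + d2_piece3 X Y Z v1 v2 v3 - d2_piece3 Z Y X v1 v2 v3.
Proof.
move=> hX hY hZ v1 v2 v3.
have linE := (lin_add hX, lin_add hY, lin_add hZ,
              lin_opp hX, lin_opp hY, lin_opp hZ).
rewrite /d2 /d2_piece1 /d2_piece2 /d2_piece3 /rb_defect /tprod.
rewrite ?(addE, oppE, opprD, opprK, linE) !rhoR_br !rhoL_br.
rewrite ?(addE, oppE, opprD, opprK, linE).
rewrite (leibniz (X v1) (Y v2) (Z v3)) (rhoR_rhoL (Y v2) (Z v3) v1).
rewrite ?(addE, oppE, opprD, opprK, linE).
abel.
Qed.

Lemma d2_ext P om om' : (forall u v, om u v = om' u v) ->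
  forall v1 v2 v3, d2 P om v1 v2 v3 = d2 P om' v1 v2 v3.
Proof. by move=> eq_om v1 v2 v3; rewrite /d2 !eq_om. Qed.

Lemma d2D P om om' : linear P -> forall v1 v2 v3,
  d2 P (fun u v => om u v + om' u v) v1 v2 v3 = d2 P om v1 v2 v3 + d2 P om' v1 v2 v3.
Proof.
move=> hP v1 v2 v3; rewrite /d2 ?(addE, oppE, opprD, lin_add hP); abel.
Qed.

Lemma d2_eq0 P om : linear P -> (forall u v, om u v = 0) ->
  forall v1 v2 v3, d2 P om v1 v2 v3 = 0.
Proof.
move=> hP om0 v1 v2 v3; rewrite /d2 !om0 !zeroE (lin_zero hP); abel.
Qed.

Lemma d2_sum P m (F : nat -> V -> V -> g) : linear P -> forall v1 v2 v3,
  d2 P (fun u v => \sum_(i < m) F i u v) v1 v2 v3 = \sum_(i < m) d2 P (F i) v1 v2 v3.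
Proof.
move=> hP v1 v2 v3; elim: m => [|m IH].
  by rewrite big_ord0; apply: d2_eq0 => // u v; rewrite big_ord0.
rewrite big_ord_recr /= -IH -d2D //; apply: d2_ext => u v.
by rewrite big_ord_recr.
Qed.

Definition obstruction (f : nat -> V -> g) (n : nat) (u v : V) : g :=
  \sum_(i < n.+1) rb_defect (f i) (f (n - i)%N) u v.

Lemma rb_defect_linl P Q : linear P -> linear Q ->
  forall v, linear (fun u => rb_defect P Q u v).
Proof.
move=> hP hQ v; apply: lin_addf; first exact: lin_comp (br_linl _) hP.
apply/lin_oppf/(lin_comp hP)/lin_addf; last exact: rhoR_linr.
exact: lin_comp (rhoL_linl _) hQ.
Qed.

Lemma rb_defect_linr P Q : linear P -> linear Q ->
  forall u, linear (fun v => rb_defect P Q u v).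
Proof.
move=> hP hQ u; apply: lin_addf; first exact: lin_comp (br_linr _) hQ.
apply/lin_oppf/(lin_comp hP)/lin_addf; first exact: rhoL_linr.
exact: lin_comp (rhoR_linl _) hQ.
Qed.

Lemma sum3_d2_rb_defect (f : nat -> V -> g) n : (forall i, linear (f i)) ->
  forall v1 v2 v3,
  sum3 n (fun a b c => d2 (f a) (rb_defect (f b) (f c)) v1 v2 v3) = 0.
Proof.
move=> hf v1 v2 v3.
rewrite -(sum3_perm_cancel n (fun a b c => d2_piece1 (f a) (f b) (f c) v1 v2 v3)
  (fun a b c => d2_piece2 (f a) (f b) (f c) v1 v2 v3)
  (fun a b c => d2_piece3 (f a) (f b) (f c) v1 v2 v3)).
by apply: eq_sum3 => a b c; rewrite d2_rb_defect.
Qed.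

Lemma d2_obstruction (f : nat -> V -> g) n : (forall i, linear (f i)) ->
  (forall k, (k < n)%N -> forall u v, obstruction f k u v = 0) ->
  forall v1 v2 v3, d2 (f 0%N) (obstruction f n) v1 v2 v3 = 0.
Proof.
move=> hf obs0 v1 v2 v3.
have: \sum_(a < n.+1) d2 (f a) (obstruction f (n - a)) v1 v2 v3 = 0.
  rewrite -[RHS](sum3_d2_rb_defect n hf v1 v2 v3) -sum3E; apply: eq_bigr => a _.
  by rewrite /obstruction (d2_sum _ (fun b => rb_defect (f b) (f (n - a - b)%N))).
rewrite big_ord_recl subn0 big1 ?addr0 // => a _.
by apply: d2_eq0 => // u v; apply: obs0; rewrite lift0; have := ltn_ord a; lia.
Qed.

Lemma obstruction_linl f n : (forall i, linear (f i)) ->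
  forall v, linear (fun u => obstruction f n u v).
Proof. by move=> hf v; apply: lin_sumf => i; exact: rb_defect_linl. Qed.

Lemma obstruction_linr f n : (forall i, linear (f i)) ->
  forall u, linear (fun v => obstruction f n u v).
Proof. by move=> hf u; apply: lin_sumf => i; exact: rb_defect_linr. Qed.

Lemma obstruction_ext f f' n : (forall i, (i <= n)%N -> f i = f' i) ->
  forall u v, obstruction f n u v = obstruction f' n u v.
Proof.
move=> eq_f u v; apply: eq_bigr => i _.
by rewrite !eq_f ?leq_subr // -ltnS.
Qed.

Lemma obstructionSE f n u v : obstruction f n.+1 u v =
  rb_defect (f 0%N) (f n.+1) u v
  + \sum_(i < n) rb_defect (f i.+1) (f (n - i)%N) u v
  + rb_defect (f n.+1) (f 0%N) u v.
Proof. by rewrite /obstruction big_ord_recr big_ord_recl /= subn0 subnn. Qed.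

Lemma obstruction_upd f n h : linear (f 0%N) -> forall u v,
  obstruction [eta f with n.+1 |-> fun x => f n.+1 x - h x] n.+1 u v =
  obstruction f n.+1 u v - (rb_defect (f 0%N) h u v + rb_defect h (f 0%N) u v).
Proof.
move=> hf0 u v; rewrite !obstructionSE /= eqxx.
rewrite (eq_bigr (fun i : 'I_n => rb_defect (f i.+1) (f (n - i)%N) u v)); last first.
  by move=> i _; rewrite !ifN_eq //; have := ltn_ord i; lia.
rewrite /rb_defect /tprod ?(addE, oppE, opprD, opprK, lin_add hf0, lin_opp hf0).
abel.
Qed.

Section Deformation.
Variables (T T1 : V -> g).
Hypotheses (HRB : relative_RB br rhoL rhoR T) (H2 : H2_vanishes br rhoL rhoR T).
Hypotheses (T1_lin : linear T1) (T1_cocycle : cocycle br rhoL rhoR T 1 (cochain1 T1)).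

Lemma T_lin : linear T. Proof. by case: HRB. Qed.

Lemma dT1E (h : seq V -> g) u v :
  dT br rhoL rhoR T 1 h [:: u; v] =
  rb_defect T (fun x => h [:: x]) u v + rb_defect (fun x => h [:: x]) T u v.
Proof.
rewrite /dT !big_ord_recr !big_ord0 /= !scale_sign /= /drop_at /=.
rewrite /rb_defect /tprod (lin_add T_lin); abel.
Qed.

Lemma dT2E (om : V -> V -> g) v1 v2 v3 :
  dT br rhoL rhoR T 2 (fun s => om s`_0 s`_1) [:: v1; v2; v3] = d2 T om v1 v2 v3.
Proof.
rewrite /dT !big_ord_recr !big_ord0 /= !scale_sign /= /drop_at /=.
rewrite /d2 /tprod; abel.
Qed.

Definition deformation_upto (n : nat) (f : nat -> V -> g) : Prop :=
  [/\ forall i, linear (f i), f 0%N = T, f 1%N = T1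
     & forall k, (k <= n)%N -> forall u v, obstruction f k u v = 0].

Lemma deformation_upto1 :
  deformation_upto 1 (fun i => match i with 0 => T | 1 => T1 | _ => fun _ => 0 end).
Proof.
split=> //.
  case=> [|[|i]]; [exact: T_lin | exact: T1_lin |].
  by move=> a x y; rewrite scaler0 addr0.
case=> [|[|k]] // _ u v.
  by rewrite /obstruction big_ord1 /rb_defect (proj2 HRB) subrr.
rewrite -(proj2 T1_cocycle [:: u; v]) // dT1E.
by rewrite /obstruction big_ord_recr big_ord1 /= addrC.
Qed.

Lemma deformation_upto_extend n f : deformation_upto n.+1 f ->
  exists f', deformation_upto n.+2 f' /\ forall i, (i <= n.+1)%N -> f' i = f i.
Proof.
case=> f_lin f0 f1 f_obs.
pose c (s : seq V) := obstruction f n.+2 s`_0 s`_1.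
have c_cocycle : cocycle br rhoL rhoR T 2 c.
  split.
    move=> [|s0 [|s1 [|? ?]]] // i _; case: i => [|[|i]] // _.
      exact: obstruction_linl.
    exact: obstruction_linr.
  move=> [|v1 [|v2 [|v3 [|? ?]]]] // _.
  by rewrite dT2E -f0; apply: d2_obstruction.
have [h [h_lin h_cob]] := H2 c_cocycle.
pose h1 x := h [:: x].
have h1_lin : linear h1 by exact: (h_lin [:: 0] 0%N).
exists [eta f with n.+2 |-> fun x => f n.+2 x - h1 x]; split; last first.
  by move=> i le_i; rewrite /= ifN_eq //; lia.
split=> //.
  move=> i /=; case: eqP => _ //.
  by apply: lin_addf; [exact: f_lin | exact: lin_oppf].
move=> k; rewrite leq_eqVlt => /orP[/eqP-> | lt_k] u v.
  have obs_h : obstruction f n.+2 u v = dT br rhoL rhoR T 1 h [:: u; v].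
    exact: (h_cob [:: u; v]).
  rewrite obstruction_upd; last exact: f_lin.
  by rewrite f0 obs_h dT1E subrr.
rewrite (@obstruction_ext _ f) ?f_obs // => i le_i /=.
by rewrite ifN_eq //; lia.
Qed.

Lemma formal_deformation_obstruction Ts : (forall i, linear (Ts i)) ->
  Ts 0%N = T -> (forall n u v, obstruction Ts n u v = 0) ->
  formal_deformation br rhoL rhoR T Ts.
Proof.
move=> Ts_lin Ts0 Ts_obs; split=> //; split=> // n u v.
move: (Ts_obs n u v); rewrite /obstruction /rb_defect sumrB => /subr0_eq ->.
apply: eq_bigr => i _; congr (Ts i _).
rewrite (eq_bigl (fun j : 'I_n.+1 => (j : nat) == (n - i)%N)).
  by rewrite (big_ord1_eq _ (fun j => tprod (Ts j) u v)) ltnS leq_subr.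
by move=> j /=; apply/eqP/eqP; have := ltn_ord i; lia.
Qed.

Lemma exists_formal_deformation :
  exists Ts, Ts 1%N = T1 /\ formal_deformation br rhoL rhoR T Ts.
Proof.
have [s s_def] := iterate_choice (P := fun n => deformation_upto n.+1)
  (R := fun n f f' => forall i, (i <= n.+1)%N -> f' i = f i)
  deformation_upto1 deformation_upto_extend.
have s_stable n i : (i <= n)%N -> s n i = s i i.
  elim: n => [|n IH]; first by rewrite leqn0 => /eqP->.
  rewrite leq_eqVlt => /orP[/eqP-> // | lt_i].
  by rewrite (s_def n).2 ?IH // ltnW.
exists (fun i => s i i); split; first by case: (s_def 1%N).1.
apply: formal_deformation_obstruction => [i||n u v].
- by case: (s_def i).1.
- by case: (s_def 0%N).1.
- rewrite (@obstruction_ext _ (s n)) => [|i le_i]; last by rewrite s_stable.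
  by case: (s_def n).1 => _ _ _; apply.
Qed.

End Deformation.

End LeibnizRepresentation.

Unset Implicit Arguments.
Set Strict Implicit.

Theorem corollary3p27 (K : fieldType) (g V : lmodType K)
  (br : g -> g -> g) (rhoL rhoR : g -> V -> V) (T : V -> g) :
  leibniz_algebra br ->
  leibniz_rep br rhoL rhoR ->
  relative_RB br rhoL rhoR T ->
  H2_vanishes br rhoL rhoR T ->
  forall T1 : V -> g, linear T1 -> cocycle br rhoL rhoR T 1 (cochain1 T1) ->
  exists Ts : nat -> V -> g,
    Ts 1%N = T1 /\ formal_deformation br rhoL rhoR T Ts.
Proof.
move=> Hla Hrep HRB H2 T1 T1_lin T1_cocycle.
exact: (exists_formal_deformation Hla Hrep HRB H2 T1_lin T1_cocycle).
Qed.
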